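(* Let $G = [V_1]H_1 \times \dots \times [V_n]H_n$ be a direct product of type 1 primitive groups $[V_i]H_i$ such that $|H_i| > |V_i|$ for each $i$. Then $G$ has Property A.
   Context: All groups are finite. A type 1 primitive group is a semidirect product $[V]H$ where $V$ is a non-trivial finite vector space over a field of prime order (an elementary abelian group) and $H$ is a subgroup of $\mathrm{Aut}(V)$ acting irreducibly on $V$, with the natural action. A group $G$ has Property A if for every non-trivial abelian normal subgroup $A$ of $G$, $|G/C_G(A)| > |A|$. *)

From mathcomp Require Import all_boot all_fingroup all_solvable.
Set Implicit Arguments.
Unset Strict Implicit.
Unset Printing Implicit Defensive.
Local Open Scope group_scope.

(* K is a type 1 primitive group [V]H, realized internally:
   K = V ><| H (semidirect product, V normal, H a complement),
   V is a non-trivial elementary abelian p-group (p prime),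
   H acts faithfully on V by conjugation (so H embeds in Aut(V) with
   the natural action), and irreducibly. *)
Definition type1_primitive (gT : finGroupType) (K V H : {set gT}) : Prop :=
  [/\ V ><| H = K,
      exists2 p, prime p & p.-abelem V,
      V != 1,
      'C_H(V) = 1
    & acts_irreducibly H V 'J].

Definition propertyA (gT : finGroupType) (G : {set gT}) : Prop :=
  forall A : {group gT}, A <| G -> abelian A -> A :!=: 1 ->
    #|A| < #|G : 'C_G(A)|.

From mathcomp Require Import all_boot all_fingroup all_solvable.
(* In a type 1 primitive group [V]H, irreducibility of H on V makes every
   nontrivial abelian normal subgroup equal to V, which is its own centralizer,
   so Property A reduces to |V| < |H|.  Property A then passes to direct
   products: an abelian normal subgroup A of X x Y has order |B| |C|, where B is
   its projection on X and C = A :&: Y are abelian and normal in their factors,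
   while C_G(A) lies in C_X(B) x C_Y(C); so |G : C_G(A)| dominates the product
   of the indices bounding |B| and |C|, strictly when A is nontrivial. *)

Set Implicit Arguments.
Unset Strict Implicit.
Unset Printing Implicit Defensive.
Local Open Scope group_scope.

Lemma propertyA_leq (gT : finGroupType) (G A : {group gT}) :
  propertyA G -> A <| G -> abelian A -> #|A| <= #|G : 'C_G(A)|.
Proof.
move=> PG nAG cAA; have [-> | ntA] := eqVneq (A : {set gT}) 1.
  by rewrite cards1 indexg_gt0.
exact/ltnW/PG.
Qed.

Lemma propertyA1 (gT : finGroupType) : propertyA [1 gT].
Proof. by move=> A /normal_sub/trivgP->; rewrite eqxx. Qed.

Lemma index_dprod (gT : finGroupType) (X Y G X1 Y1 G1 : {group gT}) :
    X \x Y = G -> X1 \x Y1 = G1 -> X1 \subset X -> Y1 \subset Y ->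
  #|G : G1| = (#|X : X1| * #|Y : Y1|)%N.
Proof.
move=> defG defG1 sX1X sY1Y.
have sG1G : G1 \subset G.
  by have [_ <- _ _] := dprodP defG; have [_ <- _ _] := dprodP defG1; exact: mulgSS.
apply/eqP; rewrite -(eqn_pmul2l (cardG_gt0 G1)) Lagrange // -(dprod_card defG).
by rewrite -(dprod_card defG1) mulnACA !Lagrange.
Qed.

Section Type1Primitive.

Variables (gT : finGroupType) (K V H : {group gT}).
Hypothesis primK : type1_primitive K V H.

Lemma type1_primitive_cent : 'C_K(V) = V.
Proof.
have [defK [p _ abV] _ cHV _] := primK; have [_ mulVH _ _] := sdprodP defK.
have sHK : H \subset K by rewrite -mulVH mulG_subr.
have sVC : V \subset 'C_K(V).
  by rewrite subsetI -{1}mulVH mulG_subl; apply: abelem_abelian abV.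
have defCHV : 'C_H(V) = H :&: 'C_K(V) by rewrite setIA (setIidPl sHK).
by rewrite -{2}(mulg1 V) -cHV defCHV group_modl // mulVH setIA setIid.
Qed.

Lemma type1_primitive_abelian_normal (A : {group gT}) :
  A <| K -> abelian A -> A :=: 1 \/ A :=: V.
Proof.
have [defK _ _ _ irrV] := primK; have [_ mulVH nVH _] := sdprodP defK.
have [sVK sHK] : V \subset K /\ H \subset K by rewrite -mulVH mulG_subl mulG_subr.
have nVK : K \subset 'N(V) by rewrite -mulVH mul_subG ?normG.
case/andP=> sAK nAK cAA; have [tiAV | ntAV] := eqVneq (A :&: V) 1.
  left; apply/trivgP; rewrite -tiAV subsetI subxx -type1_primitive_cent subsetI sAK.
  apply/commG1P/trivgP; rewrite -tiAV subsetI commg_subl commg_subr.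
  by rewrite (subset_trans sVK nAK) (subset_trans sAK nVK).
right; have [_ minV] := mingroupP irrV.
have defAV : A :&: V = V.
  apply: minV (subsetIr _ _); rewrite ntAV astabsJ normsI //.
  exact: subset_trans sHK nAK.
apply/eqP; rewrite eqEsubset -{2}defAV subsetIl andbT -type1_primitive_cent.
by rewrite subsetI sAK (subset_trans cAA) // centS // -defAV subsetIl.
Qed.

Lemma type1_primitive_propertyA : #|V| < #|H| -> propertyA K.
Proof.
move=> ltVH A nAK cAA; have [defK _ _ _ _] := primK.
case: (type1_primitive_abelian_normal nAK cAA) => ->; first by rewrite eqxx.
by rewrite type1_primitive_cent -(index_sdprod defK).
Qed.

End Type1Primitive.

Section DirectProductProjection.

Variables (gT : finGroupType) (X Y G A : {group gT}).
Hypotheses (defG : X \x Y = G) (nAG : A <| G).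

(* The projection of A on the factor X. *)
Let B := (A <*> Y :&: X)%G.
Let C := (A :&: Y)%G.

Let sAG : A \subset G := normal_sub nAG.
Let nYG : Y <| G := (dprod_normal2 defG).2.
Let nYA : A \subset 'N(Y) := subset_trans sAG (normal_norm nYG).

Let nYB : B \subset 'N(Y).
Proof. by rewrite (subset_trans (subsetIl _ _)) // join_subG nYA normG. Qed.

Lemma dprod_proj_dprod : B \x Y = A <*> Y.
Proof.
have sAYG : A <*> Y \subset G by rewrite join_subG sAG normal_sub.
by have := dprod_modr defG (joing_subr A Y); rewrite (setIidPl sAYG).
Qed.

Lemma card_dprod_proj : #|A| = (#|B| * #|C|)%N.
Proof.
apply/eqP; rewrite -(eqn_pmul2r (cardG_gt0 Y)) mul_cardG -norm_joinEl //.
by rewrite -(dprod_card dprod_proj_dprod) mulnAC.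
Qed.

Lemma dprod_proj_normal : B <| X.
Proof.
have [nXG _] := dprod_normal2 defG.
exact: normalS (subsetIr _ _) (normal_sub nXG) (normalI (normalY nAG nYG) nXG).
Qed.

Lemma dprod_proj_quotient : B / Y = A / Y.
Proof.
have [_ mulBY _ _] := dprodP dprod_proj_dprod.
by rewrite -quotientMidr mulBY quotientYidr.
Qed.

Lemma dprod_proj_abelian : abelian A -> abelian B.
Proof.
move=> cAA; have [_ _ _ tiBY] := dprodP dprod_proj_dprod.
have tiYB : Y :&: B = 1 by rewrite setIC.
rewrite (isog_abelian (quotient_isog nYB tiYB)) /= dprod_proj_quotient.
exact: quotient_abelian.
Qed.

(* Modulo Y, B is A; so [C_G(A), B] lies in Y, and also in the normal factor X. *)
Lemma cent_dprod_proj : 'C_G(A) \subset 'C(B).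
Proof.
have [_ _ _ tiXY] := dprodP defG; have [nXG _] := dprod_normal2 defG.
have sDG : 'C_G(A) \subset G := subsetIl _ _.
apply/commG1P/trivgP; rewrite -tiXY subsetI; apply/andP; split.
  rewrite (subset_trans (commgS _ (subsetIr _ _))) // commg_subr.
  exact: subset_trans sDG (normal_norm nXG).
rewrite -quotient_cents2 ?dprod_proj_quotient ?nYB //.
  exact: quotient_cents (subsetIr _ _).
exact: subset_trans sDG (normal_norm nYG).
Qed.

Lemma subcent_dprod_proj : 'C_X(B) \x 'C_Y(C) = 'C_G(B :|: C).
Proof.
have [[nXG _] [_ _ cYX _]] := (dprod_normal2 defG, dprodP defG).
have [sBX sCY] : B \subset X /\ C \subset Y by rewrite !subsetIr.
have cYB : Y \subset 'C(B) := subset_trans cYX (centS sBX).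
have cXC : X \subset 'C(C) by rewrite centsC in cYX; apply: subset_trans cYX (centS sCY).
have sBC_G : B :|: C \subset G.
  by rewrite subUset (subset_trans sBX (normal_sub nXG)) (subset_trans sCY (normal_sub nYG)).
have nXY_BC : B :|: C \subset 'N(X) :&: 'N(Y).
  by rewrite subsetI !(subset_trans sBC_G) ?normal_norm.
rewrite -(subcent_dprod defG nXY_BC) !centU setIA setICA.
rewrite (setIidPl (subset_trans (subsetIl _ _) cXC)).
by rewrite (setIidPr (subset_trans (subsetIl _ _) cYB)).
Qed.

Lemma cent_sub_dprod_proj : 'C_G(A) \subset 'C_G(B :|: C).
Proof.
rewrite centU subsetI subsetIl subsetI cent_dprod_proj.
by rewrite (subset_trans (subsetIr _ _)) // centS // subsetIl.
Qed.

End DirectProductProjection.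

Lemma propertyA_dprod (gT : finGroupType) (X Y G : {group gT}) :
  X \x Y = G -> propertyA X -> propertyA Y -> propertyA G.
Proof.
move=> defG PX PY A nAG cAA ntA; have [_ nYG] := dprod_normal2 defG.
set B := (A <*> Y :&: X)%G; set C := (A :&: Y)%G.
have nBX : B <| X := dprod_proj_normal defG nAG.
have cBB : abelian B := dprod_proj_abelian defG nAG cAA.
have nCY : C <| Y := normalS (subsetIr _ _) (normal_sub nYG) (normalI nAG nYG).
have cCC : abelian C := abelianS (subsetIl _ _) cAA.
have le_idx : #|X : 'C_X(B)| * #|Y : 'C_Y(C)| <= #|G : 'C_G(A)|.
  rewrite -(index_dprod defG (subcent_dprod_proj A defG)) ?subsetIl //.
  exact: dvdn_leq (indexgS G (cent_sub_dprod_proj defG nAG)).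
rewrite (card_dprod_proj defG nAG) -/B -/C; apply: leq_trans le_idx.
have leB := propertyA_leq PX nBX cBB; have leC := propertyA_leq PY nCY cCC.
have ntBC : (B :!=: 1) || (C :!=: 1).
  apply: contraR ntA; rewrite negb_or !negbK => /andP[/eqP trB /eqP trC].
  by rewrite trivg_card1 (card_dprod_proj defG nAG) -/B -/C trB trC cards1.
case/orP: ntBC => [/(PX _ nBX cBB) ltB | /(PY _ nCY cCC) ltC].
  exact: ltn_mull (leq_trans (cardG_gt0 C) leC) ltB leC.
exact: ltn_mulr (leq_trans (cardG_gt0 B) leB) leB ltC.
Qed.

Lemma propertyA_bigdprod (gT : finGroupType) (I : Type) (r : seq I) (P : pred I)
    (F : I -> {group gT}) (G : {group gT}) :
    (forall i, P i -> propertyA (F i)) ->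
    \big[dprod/1]_(i <- r | P i) F i = G ->
  propertyA G.
Proof.
move=> PF; elim/big_rec: _ G => [G <- | i E Pi IH G defG]; first exact: propertyA1.
have [[_ H _ defH] _ _ _] := dprodP defG.
by rewrite defH in defG; apply: propertyA_dprod defG (PF i Pi) (IH H defH).
Qed.

Theorem proposition1 (gT : finGroupType) (n : nat) (G : {group gT})
    (K V H : 'I_n -> {group gT}) :
  \big[dprod/1]_(i < n) K i = G ->
  (forall i, type1_primitive (K i) (V i) (H i)) ->
  (forall i, #|V i| < #|H i|) ->
  propertyA G.
Proof.
move=> defG primK ltVH; apply: propertyA_bigdprod defG => i _.
exact: type1_primitive_propertyA (primK i) (ltVH i).
Qed.
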